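(* Let $R \neq 0$ be a ring and let $n \geq 3$ be an integer. Then the full matrix ring ${\rm M}_n(R)$ is not a GSWNC ring.
   Context: All rings are associative with identity. An element $a$ of a ring $S$ is called strongly weakly nil-clean if there exist an idempotent $e \in S$ and a nilpotent $q \in S$ with $eq = qe$ such that $a = q + e$ or $a = q - e$. A ring $S$ is called GSWNC (generalized strongly weakly nil-clean) if every non-invertible element of $S$ is strongly weakly nil-clean. *)

From HB Require Import structures.
From mathcomp Require Import all_boot all_order all_algebra.
Set Implicit Arguments. Unset Strict Implicit. Unset Printing Implicit Defensive.
Import GRing.Theory.
Local Open Scope ring_scope.

Definition invertible (S : pzRingType) (a : S) : Prop :=
  exists b : S, a * b = 1 /\ b * a = 1.

Definition idempotent (S : pzRingType) (e : S) : Prop := e * e = e.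

Definition nilpotent (S : pzRingType) (q : S) : Prop :=
  exists k : nat, q ^+ k = 0.

Definition strongly_weakly_nil_clean (S : pzRingType) (a : S) : Prop :=
  exists (e q : S), idempotent e /\ nilpotent q /\ e * q = q * e /\
    (a = q + e \/ a = q - e).

Definition GSWNC (S : pzRingType) : Prop :=
  forall a : S, ~ invertible a -> strongly_weakly_nil_clean a.

From mathcomp Require Import all_boot all_order all_algebra.
Set Implicit Arguments. Unset Strict Implicit. Unset Printing Implicit Defensive.
Import GRing.Theory.
Local Open Scope ring_scope.

(* If a = q + e with e idempotent and q nilpotent commuting with e, then
   a^2 - a = q (q + 2e - 1) is nilpotent; if a = q - e, the same applies to
   -a = (-q) + e, so a^2 + a is nilpotent.  Now take the matrix a with
   [[0,1],[1,1]] in its top left 2x2 block and zeros elsewhere, and E the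
   idempotent e_00 + e_11: a^2 = a + E and aE = a.  Then a^2 - a = E
   and a^2 + a = a^3, so either way E = a(a - 1) is a nilpotent idempotent,
   hence E = 0, which is absurd.  For n >= 3 the matrix a has a zero row, so
   it is not invertible. *)

Section NilpotentIdempotent.
Variable S : pzRingType.
Implicit Types a e q x y : S.

Lemma idempotentX e k : idempotent e -> e ^+ k.+1 = e.
Proof. by move=> idem_e; elim: k => [|k IHk]; rewrite ?expr1 // exprS IHk. Qed.

Lemma nilpotent_idempotent_eq0 e : idempotent e -> nilpotent e -> e = 0.
Proof.
move=> idem_e [k nil_e]; rewrite -(idempotentX k idem_e).
by rewrite exprS nil_e mulr0.
Qed.

Lemma nilpotentM_comm x y : GRing.comm x y -> nilpotent x -> nilpotent (x * y).
Proof. by move=> cxy [k nil_x]; exists k; rewrite exprMn_comm // nil_x mul0r. Qed.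

Lemma nilpotentN x : nilpotent x -> nilpotent (- x).
Proof. by move=> [k nil_x]; exists k; rewrite exprNn nil_x mulr0. Qed.

Lemma nilpotent_of_exp x k : nilpotent (x ^+ k) -> nilpotent x.
Proof. by move=> [m nil_xk]; exists (k * m)%N; rewrite exprM. Qed.

Lemma nil_clean_sqr_sub_nilpotent e q :
  idempotent e -> nilpotent q -> e * q = q * e ->
  nilpotent ((q + e) * (q + e) - (q + e)).
Proof.
move=> idem_e nil_q ceq.
have -> : (q + e) * (q + e) - (q + e) = q * (q + e + e - 1).
  rewrite !(mulrDl, mulrDr, mulrN, mulr1) idem_e ceq.
  by rewrite opprD !addrA [_ - q]addrAC addrK.
apply: nilpotentM_comm nil_q.
have cqe : GRing.comm q e by rewrite /GRing.comm ceq.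
exact: commrB (commrD (commrD (commr_refl q) cqe) cqe) (commr1 q).
Qed.

Lemma swnc_nilpotent_sqr_sub_or_add a :
  strongly_weakly_nil_clean a -> nilpotent (a * a - a) \/ nilpotent (a * a + a).
Proof.
move=> [e [q [idem_e [nil_q [ceq [->|->]]]]]].
  by left; apply: nil_clean_sqr_sub_nilpotent.
right; have -> : q - e = - (- q + e) by rewrite opprD opprK.
rewrite mulrNN; apply: nil_clean_sqr_sub_nilpotent (nilpotentN nil_q) _ => //.
by rewrite mulrN mulNr ceq.
Qed.

Lemma not_swnc_of_sqr a e :
  idempotent e -> e != 0 -> a * a = a + e -> a * e = a ->
  ~ strongly_weakly_nil_clean a.
Proof.
move=> idem_e e_neq0 a2 ae swnc_a.
suff nil_e : nilpotent e by rewrite (nilpotent_idempotent_eq0 idem_e nil_e) eqxx in e_neq0.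
have e_sqr_sub : e = a * a - a by rewrite a2 addrC addKr.
case: (swnc_nilpotent_sqr_sub_or_add swnc_a) => [|nil_a2Da]; first by rewrite -e_sqr_sub.
have a3 : a ^+ 3 = a * a + a by rewrite !exprS expr0 mulr1 {1}a2 mulrDr ae.
have nil_a : nilpotent a by apply: (@nilpotent_of_exp _ 3); rewrite a3.
have -> : e = a * (a - 1) by rewrite mulrBr mulr1.
by apply: nilpotentM_comm nil_a; apply/commrB/commr1/commr_refl.
Qed.

End NilpotentIdempotent.

Lemma row_eq0_not_invertible (R : nzRingType) m (A : 'M[R]_m) i :
  row i A = 0 -> ~ invertible A.
Proof.
move=> rowA0 [B [AB _]].
have := congr1 (fun M => row i M 0 i) AB.
by rewrite /= -mulmxE row_mul rowA0 mul0mx row1 !mxE !eqxx => /eqP; rewrite eq_sym oner_eq0.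
Qed.

Section CornerFibonacci.
Variables (R : nzRingType) (m : nat) (i j : 'I_m).
Hypothesis neq_ij : i != j.

Definition corner_mx : 'M[R]_m := delta_mx i i + delta_mx j j.

Definition fib_mx : 'M[R]_m := delta_mx i j + delta_mx j i + delta_mx j j.

Let deltaM (k l k' l' : 'I_m) :
  (delta_mx k l : 'M[R]_m) * delta_mx k' l' = if l == k' then delta_mx k l' else 0.
Proof. by rewrite -mulmxE mul_delta_mx_cond; case: eqP; rewrite ?mulr1n ?mulr0n. Qed.

Let neq_ji : j != i. Proof. by rewrite eq_sym. Qed.

Lemma corner_mx_idempotent : idempotent corner_mx.
Proof.
by rewrite /idempotent /corner_mx !mulrDl !mulrDr !deltaM !eqxx (negbTE neq_ij)
  (negbTE neq_ji) addr0 add0r.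
Qed.

Lemma corner_mx_neq0 : corner_mx != 0.
Proof.
apply/eqP => /matrixP /(_ i i); rewrite !mxE !eqxx (negbTE neq_ij) addr0.
by move/eqP; rewrite oner_eq0.
Qed.

Lemma fib_mx_sqr : fib_mx * fib_mx = fib_mx + corner_mx.
Proof.
rewrite /fib_mx /corner_mx !mulrDl !mulrDr !deltaM !eqxx (negbTE neq_ij)
  (negbTE neq_ji) !addr0 !add0r.
by rewrite !addrA (ACl ((((2*4)*3)*1)*5)%AC).
Qed.

Lemma fib_mx_corner : fib_mx * corner_mx = fib_mx.
Proof.
by rewrite /fib_mx /corner_mx !mulrDl !mulrDr !deltaM !eqxx (negbTE neq_ij)
  (negbTE neq_ji) !addr0 !add0r.
Qed.

Lemma row_fib_mx k : k != i -> k != j -> row k fib_mx = 0.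
Proof.
move=> /negbTE neq_ki /negbTE neq_kj; apply/rowP => l.
by rewrite !mxE neq_ki neq_kj /= !addr0.
Qed.

End CornerFibonacci.

Theorem theorem2p25 (R : nzRingType) (n : nat) (hn : (3 <= n.+1)%N) :
  ~ GSWNC 'M[R]_n.+1.
Proof.
case: n hn => [|[|m]] // _ /(_ (fib_mx R 0 1)) swnc_fib.
have neq01 : (0 : 'I_m.+3) != 1 by [].
apply: (not_swnc_of_sqr (corner_mx_idempotent R neq01) (corner_mx_neq0 R neq01)
  (fib_mx_sqr R neq01) (fib_mx_corner R neq01)).
by apply/swnc_fib/(@row_eq0_not_invertible _ _ _ 2)/row_fib_mx.
Qed.
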